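(* Let $N$ be a complex two-step nilpotent Lie algebra whose center has dimension $p=2$, with $q=\dim N-2$, and suppose the marginal rank of $N$ equals $q$. Let $(X,I)$ be a basis of $N$, $\mathcal A=\mathcal A(X,I)$, and let $\mathcal A_{\cdot\cdot i}\in\mathbb C^{q\times q}$ be the slice of $\mathcal A$ obtained by fixing the third index to $i$, $i=1,2$. If \[ \operatorname{rank}(\mathcal A_{\cdot\cdot 1})+\operatorname{rank}(\mathcal A_{\cdot\cdot 2})>q, \] then $\mathcal A$ is not in block diagonal format $(S,T)$ for any nonempty proper subset $S\subset\{1,\dots,q\}$ (and any $T\subseteq\{1,2\}$). Consequently, if this inequality holds for the representation tensor of every basis $(X,I)$ of $N$, then $N$ is indecomposable.
   Context: A basis $(X,I)$ of $N$ consists of $I=\{\mathbf y_1,\dots,\mathbf y_p\}$, a basis of the center of $N$, and $X=\{\mathbf x_1,\dots,\mathbf x_q\}$ such that $X\cup I$ is a basis of $N$. Its representation tensor $\mathcal A(X,I)=(a_{ijk})\in\mathbb C^{q\times q\times p}$ is defined by $a_{ijk}=\alpha_k$ where $[\mathbf x_i,\mathbf x_j]=\sum_{s=1}^p\alpha_s\mathbf y_s$. A tensor is in block diagonal format $(S,T)$ if its only possibly nonzero entries occur at $(i,j,k)\in (S\times S\times T)\cup(S^\complement\times S^\complement\times T^\complement)$. The marginal rank of $N$ is the rank of the $q\times pq$ matrix $[A_1,\dots,A_p]$, where $A_k$ is the $k$-th slice $(a_{ijk})_{i,j}$ of $\mathcal A(X,I)$ (independent of the basis). A Lie algebra is indecomposable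 if it is not a direct sum of two nonzero ideals. *)

(* Complex numbers are R[i] (mathcomp-real-closed) for a
   real-number type R : realType (any realType is the real field). *)
From HB Require Import structures.
From mathcomp Require Import all_boot all_order all_algebra.
From mathcomp Require Import complex.
From mathcomp Require Import reals.
Set Implicit Arguments. Unset Strict Implicit. Unset Printing Implicit Defensive.
Import Order.TTheory GRing.Theory Num.Theory.
Local Open Scope ring_scope.

Section LieDefs.
Variable (F : fieldType) (V : vectType F).

Definition is_lie_bracket (br : V -> V -> V) : Prop :=
  [/\ forall a x y z, br (a *: x + y) z = a *: br x z + br y z,
      forall a x y z, br z (a *: x + y) = a *: br z x + br z y,
      forall x, br x x = 0 &
      forall x y z, br x (br y z) + br y (br z x) + br z (br x y) = 0].

Definition two_step_nilpotent (br : V -> V -> V) : Prop :=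
  (forall x y z, br (br x y) z = 0) /\ exists x y, br x y != 0.

Definition central (br : V -> V -> V) (z : V) : Prop := forall x, br x z = 0.

Definition center_basis (br : V -> V -> V) (I : seq V) : Prop :=
  [/\ free I, (forall y, y \in I -> central br y) &
      (forall z, central br z -> z \in <<I>>%VS)].

Definition center_dim (br : V -> V -> V) (p : nat) : Prop :=
  exists I : p.-tuple V, center_basis br I.

Definition lie_basis (br : V -> V -> V) q p (X : q.-tuple V) (I : p.-tuple V)
  : Prop := center_basis br I /\ basis_of fullv (X ++ I).

Definition rep_tensor (br : V -> V -> V) q p (X : q.-tuple V) (I : p.-tuple V)
  (i j : 'I_q) (k : 'I_p) : F := coord I k (br (tnth X i) (tnth X j)).

Definition slice (br : V -> V -> V) q p (X : q.-tuple V) (I : p.-tuple V)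
  (k : 'I_p) : 'M[F]_q := \matrix_(i, j) rep_tensor br X I i j k.

Definition marginal_mx (br : V -> V -> V) q p (X : q.-tuple V) (I : p.-tuple V)
  : 'M[F]_(q, \sum_(k < p) q) := \mxrow_(k < p) slice br X I k.

(* marginal rank of N equals r (computed in some basis; it is basis-independent) *)
Definition has_marginal_rank (br : V -> V -> V) q p (r : nat) : Prop :=
  exists (X : q.-tuple V) (I : p.-tuple V),
    lie_basis br X I /\ \rank (marginal_mx br X I) = r.

Definition block_diag_format q p (A : 'I_q -> 'I_q -> 'I_p -> F)
  (S : {set 'I_q}) (T : {set 'I_p}) : Prop :=
  forall i j k, A i j k != 0 ->
    [&& i \in S, j \in S & k \in T] || [&& i \notin S, j \notin S & k \notin T].

Definition is_ideal (br : V -> V -> V) (U : {vspace V}) : Prop :=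
  forall x u, u \in U -> br x u \in U.

Definition indecomposable (br : V -> V -> V) : Prop :=
  ~ exists U W : {vspace V},
      [/\ is_ideal br U, is_ideal br W, U != 0%VS /\ W != 0%VS,
          (U :&: W = 0)%VS & (U + W = fullv)%VS].
End LieDefs.

From HB Require Import structures.
From mathcomp Require Import all_boot all_order all_algebra.
From mathcomp Require Import complex.
From mathcomp Require Import reals.
From mathcomp Require Import zify.
Import Order.TTheory GRing.Theory Num.Theory.
Local Open Scope ring_scope.
Set Implicit Arguments. Unset Strict Implicit. Unset Printing Implicit Defensive.

(* If A(X,I) is block diagonal for (S,T), a nonzero entry a_{ijk} forces
   (i in S) = (k in T).  No row of A vanishes, since a basis vector x_i with
   [x_i, N] = 0 would be central while X spans a complement of the center; so
   for S nonempty and proper, T is neither empty nor full.  With p = 2, T is a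
   singleton and the two slices live on the complementary row sets, which
   gives rank A_1 + rank A_2 <= q.
   Conversely, if N = U + W with nonzero ideals, the center splits as
   (U cap Z) + (W cap Z) with both summands nonzero, hence two lines <z_u> and
   <z_w>.  In a basis of N adapted to U, W and Z, brackets of vectors of U lie
   in <z_u> and brackets of vectors of W in <z_w>, and the same rank bound
   follows. *)

Lemma mxrank_rows_split (F : fieldType) m n (M0 M1 : 'M[F]_(m, n))
    (P : pred 'I_m) :
  (forall i j, ~~ P i -> M0 i j = 0) -> (forall i j, P i -> M1 i j = 0) ->
  (\rank M0 + \rank M1 <= m)%N.
Proof.
move=> M0P M1P.
pose D : 'M[F]_m := diag_mx (\row_i (P i)%:R).
pose E : 'M[F]_m := diag_mx (\row_i (~~ P i)%:R).
have M0E : M0 = D *m M0.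
  apply/matrixP=> i j; rewrite mul_diag_mx !mxE.
  by case: (boolP (P i)) => Pi; rewrite ?mul1r // M0P // mulr0.
have M1E : M1 = E *m M1.
  apply/matrixP=> i j; rewrite mul_diag_mx !mxE.
  by case: (boolP (P i)) => Pi; rewrite ?mul1r // M1P // mulr0.
have ED0 : E *m D = 0.
  rewrite mulmx_diag; apply/matrixP=> i j; rewrite !mxE.
  by case: (P i); rewrite /= ?mul0r ?mulr0 ?mul0rn.
have rkM0 : (\rank M0 <= \rank D)%N by rewrite M0E mxrankM_maxl.
have rkM1 : (\rank M1 <= m - \rank D)%N.
  rewrite M1E -(mxrank_ker D); apply: leq_trans (mxrankM_maxl E M1) _.
  by apply: mxrankS; apply/sub_kermxP.
by apply: leq_trans (leq_add rkM0 rkM1) _; rewrite subnKC ?rank_leq_row.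
Qed.

Section LieBracket.
Variables (F : fieldType) (V : vectType F) (br : V -> V -> V).
Hypothesis brL : is_lie_bracket br.

Lemma br0l z : br 0 z = 0.
Proof.
by case: brL => brlin _ _ _; have := brlin (-1) 0 0 z; rewrite scaler0 addr0 scaleN1r addNr.
Qed.

Lemma br0r z : br z 0 = 0.
Proof.
by case: brL => _ brlin _ _; have := brlin (-1) 0 0 z; rewrite scaler0 addr0 scaleN1r addNr.
Qed.

Lemma brDl x y z : br (x + y) z = br x z + br y z.
Proof. by case: brL => brlin _ _ _; have := brlin 1 x y z; rewrite !scale1r. Qed.

Lemma brDr x y z : br z (x + y) = br z x + br z y.
Proof. by case: brL => _ brlin _ _; have := brlin 1 x y z; rewrite !scale1r. Qed.

Lemma brZl a x z : br (a *: x) z = a *: br x z.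
Proof. by case: brL => brlin _ _ _; have := brlin a x 0 z; rewrite !addr0 br0l addr0. Qed.

Lemma brZr a x z : br z (a *: x) = a *: br z x.
Proof. by case: brL => _ brlin _ _; have := brlin a x 0 z; rewrite !addr0 br0r addr0. Qed.

Lemma brC x y : br x y = - br y x.
Proof.
case: brL => _ _ brxx _; apply/eqP; rewrite -addr_eq0.
by have := brxx (x + y); rewrite brDl !brDr !brxx add0r addr0 => ->.
Qed.

Lemma br_suml n (f : 'I_n -> V) z : br (\sum_i f i) z = \sum_i br (f i) z.
Proof. exact: (big_morph (br^~ z) (fun a b => brDl a b z) (br0l z)). Qed.

Lemma br_sumr n (f : 'I_n -> V) x : br x (\sum_i f i) = \sum_i br x (f i).
Proof. exact: (big_morph (br x) (fun a b => brDr a b x) (br0r x)). Qed.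

Lemma central_span n (B : n.-tuple V) z :
  (forall b, b \in B -> central br b) -> z \in <<B>>%VS -> central br z.
Proof.
move=> centB /coord_span -> x; rewrite br_sumr big1 // => i _.
by rewrite brZr centB ?scaler0 // mem_nth // size_tuple.
Qed.

Lemma central_spanning n (B : n.-tuple V) z :
  <<B>>%VS = fullv -> (forall b, b \in B -> br b z = 0) -> central br z.
Proof.
move=> spanB Bz x; have := memvf x; rewrite -spanB => /coord_span ->.
rewrite br_suml big1 // => i _.
by rewrite brZl Bz ?scaler0 // mem_nth // size_tuple.
Qed.

Lemma center_basisP n (I : n.-tuple V) z :
  center_basis br I -> reflect (central br z) (z \in <<I>>%VS).
Proof.
by case=> _ centI spanI; apply: (iffP idP) => [|/spanI]; first exact: central_span.
Qed.

Lemma br_central x y : two_step_nilpotent br -> central br (br x y).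
Proof. by case=> brbr0 _ z; rewrite brC brbr0 oppr0. Qed.

End LieBracket.

Section BlockFormat.
Variables (F : fieldType) (q p : nat) (A : 'I_q -> 'I_q -> 'I_p -> F).
Variables (S : {set 'I_q}) (T : {set 'I_p}).
Hypothesis AST : block_diag_format A S T.

Lemma block_diag_format_mem i j k : A i j k != 0 -> (i \in S) = (k \in T).
Proof. by move/AST; case: (i \in S); case: (k \in T); rewrite ?andbF. Qed.

Lemma block_diag_format_proper :
  (forall i, [exists j, exists k, A i j k != 0]) -> S != set0 -> S != setT ->
  T != set0 /\ T != setT.
Proof.
move=> rowA /set0Pn[i iS]; rewrite -subTset => /subsetPn[i' _ i'S].
have /existsP[j /existsP[k /block_diag_format_mem]] := rowA i; rewrite iS => kT.
have /existsP[j' /existsP[k' /block_diag_format_mem]] := rowA i'.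
rewrite (negbTE i'S) => k'T.
split; apply/eqP => T0; [by rewrite T0 inE in kT | by rewrite T0 inE in k'T].
Qed.

End BlockFormat.

Lemma ord2_set_proper (T : {set 'I_2}) :
  T != set0 -> T != setT -> (ord_max \in T) = (ord0 \notin T).
Proof.
have I2E (k : 'I_2) : k = ord0 \/ k = ord_max.
  by case: k => [[|[|//]]] lt_k2; [left | right]; apply/val_inj.
move=> /set0Pn[k kT]; rewrite -subTset => /subsetPn[k' _ k'T].
case: (I2E k) (I2E k') kT k'T => -> [] -> kT /negbTE k'T; rewrite ?kT ?k'T //.
all: by rewrite kT in k'T.
Qed.

Lemma block_diag_format_slice_rank (F : fieldType) q (A : 'I_q -> 'I_q -> 'I_2 -> F)
    (S : {set 'I_q}) (T : {set 'I_2}) :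
  block_diag_format A S T -> (ord_max \in T) = (ord0 \notin T) ->
  (\rank (\matrix_(i, j) A i j ord0) + \rank (\matrix_(i, j) A i j ord_max) <= q)%N.
Proof.
move=> AST T2.
apply: (@mxrank_rows_split _ _ _ _ _ [pred i | (i \in S) == (ord0 \in T)])
  => i j /= iS; rewrite mxE; apply/eqP/negbNE/negP => /(block_diag_format_mem AST) iST.
  by rewrite iST eqxx in iS.
by rewrite iST T2 in iS; case: (ord0 \in T) iS.
Qed.

Section LieBasis.
Variables (F : fieldType) (V : vectType F) (br : V -> V -> V).
Hypotheses (brL : is_lie_bracket br) (brN : two_step_nilpotent br).

Lemma rep_tensor_row_neq0 q p (X : q.-tuple V) (I : p.-tuple V) i :
  lie_basis br X I -> [exists j, exists k, rep_tensor br X I i j k != 0].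
Proof.
case=> cI bXI; apply: contraT => /existsPn row0.
have brXi0 j : br (tnth X i) (tnth X j) = 0.
  have := br_central brL (tnth X i) (tnth X j) brN.
  move/(center_basisP brL _ cI)/coord_span ->.
  rewrite big1 // => k _; move/existsPn/(_ k)/negPn/eqP: (row0 j).
  by rewrite /rep_tensor => ->; rewrite scale0r.
have Xi_central : central br (tnth X i).
  apply: (central_spanning brL (B := in_tuple (X ++ I))); first exact: span_basis bXI.
  move=> b; rewrite mem_cat => /orP[/tnthP[j ->] | bI]; last first.
    by case: cI => _ centI _; rewrite brC // (centI _ bI) oppr0.
  by rewrite brC // brXi0 oppr0.
have Xi_in_I : tnth X i \in <<I>>%VS by apply/(center_basisP brL _ cI).
have := basis_free bXI; rewrite cat_free => /and3P[freeX _ /directv_addP XI0].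
have : tnth X i \in (<<X>> :&: <<I>>)%VS by rewrite memv_cap Xi_in_I memv_span ?mem_tnth.
by rewrite XI0 memv0 (negbTE (free_not0 freeX (mem_tnth i X))).
Qed.

Lemma lie_basis_not_block_diag q (X : q.-tuple V) (I : 2.-tuple V)
    (S : {set 'I_q}) (T : {set 'I_2}) :
  lie_basis br X I ->
  (q < \rank (slice br X I ord0) + \rank (slice br X I ord_max))%N ->
  S != set0 -> S != setT -> ~ block_diag_format (rep_tensor br X I) S T.
Proof.
move=> XI rk_gt S0 ST AST.
have [T0 TT] := block_diag_format_proper AST (fun i => rep_tensor_row_neq0 i XI) S0 ST.
have := block_diag_format_slice_rank AST (ord2_set_proper T0 TT).
by rewrite leqNgt rk_gt.
Qed.

End LieBasis.

Lemma vline_vpick (F : fieldType) (V : vectType F) (U : {vspace V}) :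
  \dim U = 1%N -> (<[vpick U]> = U)%VS.
Proof.
move=> dimU; apply/eqP; rewrite eqEdim -memvE memv_pick dim_vline vpick0.
by rewrite -dimv_eq0 dimU.
Qed.

Section IdealDecomposition.
Variables (F : fieldType) (V : vectType F) (br : V -> V -> V).
Hypotheses (brL : is_lie_bracket br) (brN : two_step_nilpotent br).
Variables (U W : {vspace V}).
Hypotheses (idU : is_ideal br U) (idW : is_ideal br W).
Hypotheses (UW0 : (U :&: W = 0)%VS) (UWT : (U + W = fullv)%VS).

Lemma ideal_brl x u : u \in U -> br u x \in U.
Proof. by move=> uU; rewrite brC // memvN idU. Qed.

Lemma ideal_br_cross u w : u \in U -> w \in W -> br u w = 0.
Proof.
move=> uU wW; apply/eqP; rewrite -memv0 -UW0 memv_cap idW // andbT.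
exact: ideal_brl.
Qed.

Lemma ideal_br_crossC u w : u \in U -> w \in W -> br w u = 0.
Proof. by move=> uU wW; rewrite brC // ideal_br_cross ?oppr0. Qed.

Lemma br_ideal_component x u :
  u \in U -> exists2 xu, xu \in U & br x u = br xu u.
Proof.
move=> uU; have /memv_addP[xu xuU [xw xwW ->]] : x \in (U + W)%VS by rewrite UWT memvf.
by exists xu; rewrite // brDl // (ideal_br_crossC uU xwW) addr0.
Qed.

Lemma central_ideal_component u w :
  u \in U -> w \in W -> central br (u + w) -> central br u.
Proof.
move=> uU wW central_uw x; have [xu xuU ->] := br_ideal_component x uU.
by rewrite -[RHS](central_uw xu) brDr // (ideal_br_cross xuU wW) addr0.
Qed.

Lemma center_cap_ideal_neq0 n (I : n.-tuple V) :
  center_basis br I -> U != 0%VS -> (U :&: <<I>>)%VS != 0%VS.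
Proof.
move=> cI; apply: contra => /eqP UZ0; rewrite -subv0; apply/subvP => u uU.
have brU0 x : br x u = 0.
  have [xu xuU ->] := br_ideal_component x uU; apply/eqP; rewrite -memv0 -UZ0.
  by rewrite memv_cap idU //; apply/(center_basisP brL _ cI)/br_central.
by rewrite -UZ0 memv_cap uU; apply/(center_basisP brL _ cI).
Qed.

End IdealDecomposition.

Section SplitBasis.
Variables (F : fieldType) (V : vectType F) (br : V -> V -> V).
Hypotheses (brL : is_lie_bracket br) (brN : two_step_nilpotent br).
Variables (U W : {vspace V}) (I0 : 2.-tuple V) (q : nat).
Hypotheses (idU : is_ideal br U) (idW : is_ideal br W).
Hypotheses (UW0 : (U :&: W = 0)%VS) (UWT : (U + W = fullv)%VS).
Hypotheses (U0 : U != 0%VS) (W0 : W != 0%VS).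
Hypotheses (cI0 : center_basis br I0) (dimV : \dim (fullv : {vspace V}) = (q + 2)%N).

Let Z := <<I0>>%VS.
Let Zu := (U :&: Z)%VS.
Let Zw := (W :&: Z)%VS.

Let WU0 : (W :&: U = 0)%VS. Proof. by rewrite capvC. Qed.
Let WUT : (W + U = fullv)%VS. Proof. by rewrite addvC. Qed.

Lemma center_cap_ideal_sum : (Zu + Zw = Z)%VS.
Proof.
apply/eqP; rewrite eqEsubv subv_add !capvSr /=; apply/subvP => z zZ.
have /memv_addP[u uU [w wW zE]] : z \in (U + W)%VS by rewrite UWT memvf.
have /(center_basisP brL _ cI0) central_z := zZ.
apply/memv_addP; exists u; last exists w => //.
  rewrite memv_cap uU; apply/(center_basisP brL _ cI0).
  by apply: (central_ideal_component brL idU idW UW0 UWT uU wW); rewrite -zE.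
rewrite memv_cap wW; apply/(center_basisP brL _ cI0).
by apply: (central_ideal_component brL idW idU WU0 WUT wW uU); rewrite addrC -zE.
Qed.

Lemma dim_center_cap_ideals : \dim Zu = 1%N /\ \dim Zw = 1%N.
Proof.
have Zuw0 : (Zu :&: Zw = 0)%VS by apply/eqP; rewrite -subv0 -UW0 capvS ?capvSl.
have := dimv_disjoint_sum Zuw0; rewrite center_cap_ideal_sum.
have [/eqP dimZ _ _] := cI0; rewrite size_tuple in dimZ; rewrite /Z dimZ.
have := center_cap_ideal_neq0 brL brN idU idW UW0 UWT cI0 U0.
have := center_cap_ideal_neq0 brL brN idW idU WU0 WUT cI0 W0.
rewrite -!dimv_eq0 -/Zu -/Zw; lia.
Qed.

Let zu := vpick Zu.
Let zw := vpick Zw.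
Let I := [tuple zu; zw].

Let span_I : (<<I>> = Z)%VS.
Proof.
have [dimZu dimZw] := dim_center_cap_ideals.
by rewrite /= span_cons span_seq1 !vline_vpick // center_cap_ideal_sum.
Qed.

Let free_I : free I.
Proof.
have [/eqP dimZ _ _] := cI0; rewrite size_tuple in dimZ.
have : basis_of Z I by rewrite basisEdim span_I subvv size_tuple dimZ.
exact: basis_free.
Qed.

Lemma center_basis_split : center_basis br I.
Proof.
split => // [y yI | z].
  by apply/(center_basisP brL _ cI0); rewrite -/Z -span_I memv_span.
by move/(center_basisP brL _ cI0); rewrite span_I.
Qed.

Let dU := \dim (U :\: Z).

Lemma size_split_basis : size (vbasis (U :\: Z) ++ vbasis (W :\: Z)) == q.
Proof.
rewrite size_cat !size_tuple; have := dimv_disjoint_sum UW0.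
rewrite UWT dimV -(dimv_cap_compl U Z) -(dimv_cap_compl W Z).
have [] := dim_center_cap_ideals; rewrite -/Zu -/Zw => -> ->; lia.
Qed.

Let X := Tuple size_split_basis.

Lemma lie_basis_split : lie_basis br X I.
Proof.
split; first exact: center_basis_split.
rewrite basisEdim size_cat !size_tuple dimV leqnn andbT /=.
rewrite !span_cat !(span_basis (vbasisP _)) span_I -UWT subv_add.
apply/andP; split.
  by rewrite (subv_trans (addvSl U Z)) // -(addv_diff U Z) addvS ?addvSl.
by rewrite (subv_trans (addvSl W Z)) // -(addv_diff W Z) addvS ?addvSr.
Qed.

Lemma split_basis_mem a : tnth X a \in (if (a < dU)%N then U else W).
Proof.
rewrite (tnth_nth 0) /= nth_cat size_tuple; case: ifP => lt_a_dU.
  by apply/(subvP (diffvSl U Z))/vbasis_mem/mem_nth; rewrite size_tuple.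
apply/(subvP (diffvSl W Z))/vbasis_mem/mem_nth.
have := eqP size_split_basis; rewrite size_cat !size_tuple.
by move: (ltn_ord a) lt_a_dU; lia.
Qed.

Lemma split_basis_slice_rank :
  (\rank (slice br X I ord0) + \rank (slice br X I ord_max) <= q)%N.
Proof.
have [dimZu dimZw] := dim_center_cap_ideals.
have br_cap Y a b :
    is_ideal br Y -> tnth X a \in Y -> br (tnth X a) (tnth X b) \in (Y :&: Z)%VS.
  move=> idY XaY; rewrite memv_cap ideal_brl //.
  by apply/(center_basisP brL _ cI0)/br_central.
apply: (@mxrank_rows_split _ _ _ _ _ [pred a : 'I_q | (a < dU)%N])
  => a b /= ltn_a; rewrite mxE /rep_tensor.
  have XaW : tnth X a \in W by have := split_basis_mem a; rewrite (negbTE ltn_a).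
  have := br_cap W a b idW XaW; rewrite -/Zw -(vline_vpick dimZw) => /vlineP[c ->].
  by rewrite linearZ /= (coord_free ord_max ord0 free_I) mulr0.
have XaU : tnth X a \in U by have := split_basis_mem a; rewrite ltn_a.
have := br_cap U a b idU XaU; rewrite -/Zu -(vline_vpick dimZu) => /vlineP[c ->].
by rewrite linearZ /= (coord_free ord0 ord_max free_I) mulr0.
Qed.

Lemma decomposition_slice_rank : exists (X : q.-tuple V) (I : 2.-tuple V),
  lie_basis br X I /\ (\rank (slice br X I ord0) + \rank (slice br X I ord_max) <= q)%N.
Proof. by exists X, I; split; [exact: lie_basis_split | exact: split_basis_slice_rank]. Qed.

End SplitBasis.

Theorem lemma6 (R : realType) (V : vectType R[i]) (br : V -> V -> V) (q : nat) :
  is_lie_bracket br -> two_step_nilpotent br ->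
  center_dim br 2 -> \dim (fullv : {vspace V}) = (q + 2)%N ->
  has_marginal_rank br q 2 q ->
  (forall (X : q.-tuple V) (I : 2.-tuple V), lie_basis br X I ->
     (q < \rank (slice br X I ord0) + \rank (slice br X I ord_max))%N ->
     forall (S : {set 'I_q}) (T : {set 'I_2}),
       S != set0 -> S != setT ->
       ~ block_diag_format (rep_tensor br X I) S T)
  /\
  ((forall (X : q.-tuple V) (I : 2.-tuple V), lie_basis br X I ->
     (q < \rank (slice br X I ord0) + \rank (slice br X I ord_max))%N) ->
   indecomposable br).
Proof.
move=> brL brN [I0 cI0] dimV _; split=> [X I XI rk_gt S T | rk_gt].
  exact: lie_basis_not_block_diag.
move=> [U [W [idU idW [U0 W0] UW0 UWT]]].
have [X [I [XI rk_le]]] :=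
  decomposition_slice_rank brL brN idU idW UW0 UWT U0 W0 cI0 dimV.
by move: (rk_gt X I XI); rewrite ltnNge rk_le.
Qed.
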